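(* Let $J=p\ge1$, $\sigma_\varepsilon^2>0$, $\sigma_\gamma^2>0$, $0\le\rho\le1$, and let $\mathbf{\Sigma}_\gamma=\sigma_\gamma^2\big((1-\rho)\mathbf{I}_J+\rho\mathbf{1}_J\mathbf{1}_J^{\mathrm T}\big)$ (compound symmetry). Let $\mathbf{A}_{\bm\beta}$ be a nonsingular $J\times J$ matrix and $I$ a positive integer. For an exact design $\xi=(I_1,\dots,I_J)$ (nonnegative integers with $\sum_jI_j=I$) let $$\mathbf{M}_{\bm\beta}(\xi)=\mathbf{A}_{\bm\beta}^{\mathrm T}\mathbf{M}_0(\xi)^{1/2}\big(\sigma_\varepsilon^2\mathbf{I}_J+\mathbf{M}_0(\xi)^{1/2}\mathbf{\Sigma}_\gamma\mathbf{M}_0(\xi)^{1/2}\big)^{-1}\mathbf{M}_0(\xi)^{1/2}\mathbf{A}_{\bm\beta},\quad \mathbf{M}_0(\xi)^{1/2}=\mathrm{diag}(\sqrt{I_1},\dots,\sqrt{I_J}).$$ Then an exact design is $D$-optimal among exact designs if $I_j^*=[I/J]+1$ for $J'=I \bmod J$ of the time points and $I_j^*=[I/J]$ for the remaining $J-J'$ time points. In particular, if $I$ is a multiple of $J$, the uniform design with $I_j^*=I/J$ for all $j=1,\dots,J$ is $D$-optimal.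
   Context: $[a]$ denotes the integer part of $a$ and $m\bmod n=m-n[m/n]$. $\mathbf{A}_{\bm\beta}$ is the Jacobian of the mean response curve at a fixed parameter $\bm\beta$ with as many parameters as time points. $\bm\beta$ is estimable under $\xi$ if $\mathbf{A}_{\bm\beta}$ has full column rank and its columns lie in the column space of $\mathrm{diag}(I_1,\dots,I_J)$ (here: all $I_j>0$). A design $\xi^*$ is $D$-optimal if $\log\det\mathbf{M}_{\bm\beta}(\xi^* )\ge\log\det\mathbf{M}_{\bm\beta}(\xi)$ for all designs $\xi$ (of the considered class, with total $I$) under which $\bm\beta$ is estimable. *)

From HB Require Import structures.
From mathcomp Require Import all_boot all_order all_algebra.
From mathcomp Require Import all_classical all_reals all_analysis.
Set Implicit Arguments. Unset Strict Implicit. Unset Printing Implicit Defensive.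
Import Order.TTheory GRing.Theory Num.Theory.
Local Open Scope ring_scope.

Definition Sigma_gamma (R : realType) (J : nat) (sg2 rho : R) : 'M[R]_J :=
  sg2 *: ((1 - rho) *: 1%:M + rho *: const_mx 1).

Definition M0half (R : realType) (J : nat) (xi : 'I_J -> nat) : 'M[R]_J :=
  diag_mx (\row_j Num.sqrt ((xi j)%:R : R)).

Definition Mbeta (R : realType) (J : nat) (se2 sg2 rho : R) (A : 'M[R]_J)
    (xi : 'I_J -> nat) : 'M[R]_J :=
  let D := M0half R xi in
  A^T *m D *m invmx (se2 *: 1%:M + D *m Sigma_gamma J sg2 rho *m D) *m D *m A.

Definition exact_design (J I : nat) (xi : 'I_J -> nat) : Prop :=
  (\sum_(j < J) xi j)%N = I.

Definition estimable (R : realType) (J : nat) (A : 'M[R]_J) (xi : 'I_J -> nat) : Prop :=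
  \rank A = J /\ (forall j, (0 < xi j)%N).

Definition D_optimal (R : realType) (J I : nat) (se2 sg2 rho : R) (A : 'M[R]_J)
    (xistar : 'I_J -> nat) : Prop :=
  exact_design I xistar /\
  forall xi : 'I_J -> nat, exact_design I xi -> estimable A xi ->
    ln (\det (Mbeta se2 sg2 rho A xi)) <= ln (\det (Mbeta se2 sg2 rho A xistar)).

From HB Require Import structures.
From mathcomp Require Import all_boot all_order all_algebra.
From mathcomp Require Import all_classical all_reals all_analysis.
From mathcomp Require Import ring lra zify.
Import Order.TTheory GRing.Theory Num.Theory.
Local Open Scope ring_scope.

(* With D = M0^(1/2), the inner matrix factors as
   se2 I + D Sigma D = D W D,  W = Sigma + se2 M0^-1 = diag(v_j) + k 1 1^T,
   where v_j = c + se2 / I_j, c = sg2 (1 - rho) and k = sg2 rho; hence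
   det M(xi) = det(A)^2 / det W and det W = prod_j v_j (1 + k sum_j 1/v_j).
   Freezing all coordinates but a and b, det W = P (v_a v_b (1 + k S) + k (v_a + v_b))
   with P, S >= 0, so it decreases when both v_a + v_b and v_a v_b do.  By convexity of
   n |-> 1/n this happens when one observation is moved from a time point with
   I_a >= I_b + 2 to b.  Such moves strictly decrease sum_j I_j^2, so every design
   reaches a balanced one (the I_j differ by at most one) without increasing det W,
   and all balanced designs of total I have the same multiset of I_j. *)

Lemma det1D_mulmxC {R : comNzRingType} {m n : nat} (P : 'M[R]_(m, n)) (Q : 'M[R]_(n, m)) :
  \det (1%:M + P *m Q) = \det (1%:M + Q *m P).
Proof.
have eP : block_mx (1%:M + P *m Q) (- P) 0 1%:M *m block_mx 1%:M 0 Q 1%:M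
        = block_mx 1%:M (- P) Q 1%:M.
  by rewrite mulmx_block !(mulmx1, mul1mx, mulmx0, mul0mx, addr0, add0r) mulNmx addrK.
have eQ : block_mx 1%:M 0 Q 1%:M *m block_mx 1%:M (- P) 0 (1%:M + Q *m P)
        = block_mx 1%:M (- P) Q 1%:M.
  by rewrite mulmx_block !(mulmx1, mul1mx, mulmx0, mul0mx, addr0, add0r) mulmxN addrCA addNr addr0.
have := congr1 determinant (etrans eP (esym eQ)).
by rewrite !det_mulmx !det_ublock (@det_lblock _ m n) !det1 !mulr1 !mul1r.
Qed.

Definition diag_rank1_det {R : fieldType} {n : nat} (v : 'I_n -> R) (k : R) : R :=
  (\prod_i v i) * (1 + k * \sum_i (v i)^-1).

Lemma det_diag_rank1 {R : fieldType} {n : nat} (v : 'I_n -> R) (k : R) :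
  (forall i, v i != 0) ->
  \det (diag_mx (\row_i v i) + k *: const_mx 1) = diag_rank1_det v k.
Proof.
move=> v_neq0.
pose P : 'M[R]_(n, 1) := \col_i (k / v i).
have -> : diag_mx (\row_i v i) + k *: const_mx 1
        = diag_mx (\row_i v i) *m (1%:M + P *m const_mx 1).
  apply/matrixP=> i j; rewrite mulmxDr mulmx1 mul_diag_mx !mxE big_ord1 !mxE.
  by rewrite !mulr1 mulrCA divff ?mulr1.
rewrite det_mulmx det_diag det1D_mulmxC det_mx11 !mxE eqxx mulr1n /diag_rank1_det.
congr (_ * (1 + _)); first by apply: eq_bigr => i _; rewrite mxE.
by rewrite mulr_sumr; apply: eq_bigr => i _; rewrite !mxE mul1r.
Qed.

Lemma diag_rank1_det_gt0 {R : realFieldType} {n : nat} (v : 'I_n -> R) (k : R) :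
  0 <= k -> (forall i, 0 < v i) -> 0 < diag_rank1_det v k.
Proof.
move=> k_ge0 v_gt0; apply: mulr_gt0; first exact: prodr_gt0.
apply: (lt_le_trans ltr01); rewrite lerDl mulr_ge0 // sumr_ge0 // => i _.
by rewrite invr_ge0 ltW.
Qed.

Lemma bigD2 {T : Type} {idx : T} {op : Monoid.com_law idx} {I : finType} {a b : I}
    {F : I -> T} :
  a != b ->
  \big[op/idx]_i F i = op (F a) (op (F b) (\big[op/idx]_(i | (i != a) && (i != b)) F i)).
Proof. by move=> ab; rewrite (bigD1 a) // (bigD1 b) // eq_sym. Qed.

Lemma diag_rank1_det_exchange {R : realFieldType} {n : nat} (k : R) (v w : 'I_n -> R)
    (a b : 'I_n) :
  a != b -> 0 <= k -> (forall i, 0 < v i) ->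
  (forall i, (i != a) && (i != b) -> w i = v i) -> 0 < w a -> 0 < w b ->
  w a + w b <= v a + v b -> w a * w b <= v a * v b ->
  diag_rank1_det w k <= diag_rank1_det v k.
Proof.
move=> ab k_ge0 v_gt0 w_off wa_gt0 wb_gt0 sum_le prod_le.
rewrite /diag_rank1_det !(bigD2 ab).
rewrite (eq_bigr _ w_off) [X in k * (_ + (_ + X))](eq_bigr (fun i => (v i)^-1)); last first.
  by move=> i /w_off ->.
set P := \prod_(i | _) v i; set S := \sum_(i | _) (v i)^-1.
have P_ge0 : 0 <= P by apply: prodr_ge0 => i _; apply: ltW.
have S_ge0 : 0 <= S by apply: sumr_ge0 => i _; rewrite invr_ge0 ltW.
have split_pair x y : x != 0 -> y != 0 ->
    x * (y * P) * (1 + k * (x^-1 + (y^-1 + S))) = P * (x * y * (1 + k * S) + k * (x + y)).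
  by move=> x0 y0; field; rewrite x0 y0.
rewrite !split_pair ?gt_eqF //; apply: ler_wpM2l => //.
apply: lerD; last exact: ler_wpM2l.
by apply: ler_wpM2r => //; rewrite addr_ge0 // mulr_ge0.
Qed.

Lemma inv_transfer_le {R : realFieldType} {x y : R} : 0 < x -> x + 1 <= y ->
  y^-1 + (x + 1)^-1 <= (y + 1)^-1 + x^-1 /\ y^-1 * (x + 1)^-1 <= (y + 1)^-1 * x^-1.
Proof.
move=> x_gt0 xy; have y_gt0 : 0 < y by lra.
have inv_step (t : R) : 0 < t -> t^-1 - (t + 1)^-1 = (t * (t + 1))^-1.
  by move=> t_gt0; field; rewrite !gt_eqF // ltr_wpDr.
split.
  suff : y^-1 - (y + 1)^-1 <= x^-1 - (x + 1)^-1 by lra.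
  rewrite !inv_step // lef_pV2 ?posrE ?mulr_gt0 ?ltr_wpDr //.
  by apply: ler_pM; rewrite ?addr_ge0 ?ltW //; lra.
rewrite -!invfM lef_pV2 ?posrE ?mulr_gt0 ?ltr_wpDr //.
by rewrite mulrDl mulrDr mulr1 mul1r [y * x]mulrC lerD2l; lra.
Qed.

Lemma affine_prod_le {R : realDomainType} (c s p q p' q' : R) : 0 <= c -> 0 <= s ->
  p + q <= p' + q' -> p * q <= p' * q' ->
  (c + s * p) * (c + s * q) <= (c + s * p') * (c + s * q').
Proof.
move=> c_ge0 s_ge0 sum_le prod_le.
have expand x y : (c + s * x) * (c + s * y) = c ^+ 2 + c * s * (x + y) + s ^+ 2 * (x * y).
  by ring.
by rewrite !expand lerD ?lerD2l ?ler_wpM2l ?mulr_ge0 ?sqr_ge0.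
Qed.

Definition mean_var {R : realFieldType} (se2 c : R) (n : nat) : R := c + se2 / n%:R.

Lemma mean_var_gt0 {R : realFieldType} (se2 c : R) (n : nat) :
  0 < se2 -> 0 <= c -> (0 < n)%N -> 0 < mean_var se2 c n.
Proof. by move=> se2_gt0 c_ge0 n_gt0; rewrite ltr_wpDl // divr_gt0 ?ltr0n. Qed.

Lemma mean_var_transfer {R : realFieldType} {se2 c : R} {m n : nat} :
  0 <= se2 -> 0 <= c -> (0 < n)%N -> (n < m)%N ->
  mean_var se2 c m + mean_var se2 c n.+1 <= mean_var se2 c m.+1 + mean_var se2 c n /\
  mean_var se2 c m * mean_var se2 c n.+1 <= mean_var se2 c m.+1 * mean_var se2 c n.
Proof.
move=> se2_ge0 c_ge0 n_gt0 nm; rewrite /mean_var -[m.+1%:R]natr1 -[n.+1%:R]natr1.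
have n_gt0' : 0 < n%:R :> R by rewrite ltr0n.
have nm' : n%:R + 1 <= m%:R :> R by rewrite natr1 ler_nat.
have [sum_le prod_le] := inv_transfer_le n_gt0' nm'.
split; last exact: affine_prod_le.
by rewrite addrACA [X in _ <= X]addrACA lerD2l -!mulrDr ler_wpM2l.
Qed.

Section Transfer.
Context {J : nat}.
Implicit Types (g : 'I_J -> nat) (a b j : 'I_J).

Definition transfer g a b : 'I_J -> nat :=
  fun j => if j == a then (g a).-1 else if j == b then (g b).+1 else g j.

Lemma transfer_src g a b : transfer g a b a = (g a).-1.
Proof. by rewrite /transfer eqxx. Qed.

Lemma transfer_dst g a b : a != b -> transfer g a b b = (g b).+1.
Proof. by rewrite /transfer eq_sym => /negbTE ->; rewrite eqxx. Qed.

Lemma transfer_off g a b j : (j != a) && (j != b) -> transfer g a b j = g j.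
Proof. by rewrite /transfer => /andP[/negbTE -> /negbTE ->]. Qed.

Lemma sum_transfer (F : nat -> nat) g a b : a != b ->
  (\sum_j F (transfer g a b j) + (F (g a) + F (g b))
   = \sum_j F (g j) + (F (g a).-1 + F (g b).+1))%N.
Proof.
move=> ab; rewrite !(bigD2 ab) transfer_src transfer_dst //.
by rewrite (eq_bigr (fun j => F (g j))) => [/=|j /transfer_off ->]; lia.
Qed.

Lemma transfer_sum {g a b} : a != b -> (0 < g a)%N ->
  (\sum_j transfer g a b j = \sum_j g j)%N.
Proof. by move=> ab ga_gt0; have := sum_transfer id g a b ab; lia. Qed.

Lemma transfer_sum_sq_lt {g a b} : ((g b).+2 <= g a)%N ->
  (\sum_j transfer g a b j ^ 2 < \sum_j g j ^ 2)%N.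
Proof.
move=> gba; have ab : a != b by apply: contraTneq gba => ->; lia.
have := sum_transfer (fun n => n ^ 2)%N g a b ab; nia.
Qed.

Lemma transfer_gt0 {g a b} : (forall j, (0 < g j)%N) -> ((g b).+2 <= g a)%N ->
  forall j, (0 < transfer g a b j)%N.
Proof.
move=> g_gt0 gba j; rewrite /transfer; case: (j == a); first lia.
by case: (j == b).
Qed.

Definition balanced g := forall a b, (g a <= (g b).+1)%N.

Lemma balanced_ind (P : ('I_J -> nat) -> Prop) :
  (forall g, balanced g -> P g) ->
  (forall g a b, ((g b).+2 <= g a)%N -> P (transfer g a b) -> P g) ->
  forall g, P g.
Proof.
move=> P_bal P_step g.
elim: (\sum_j g j ^ 2)%N.+1 {-2}g (ltnSn (\sum_j g j ^ 2)) => // n IH {}g g_lt.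
case: (boolP [exists a, exists b, (g b).+2 <= g a]%N) => [/existsP[a /existsP[b gba]]|].
  exact: P_step _ _ _ gba (IH _ (leq_trans (transfer_sum_sq_lt gba) g_lt)).
rewrite negb_exists => /forallP no_gap; apply: P_bal => a b.
by have /existsPn/(_ b) := no_gap a; rewrite -ltnNge.
Qed.

Lemma sum_two_valued {g q} : (forall j, g j = q \/ g j = q.+1) ->
  (\sum_j g j = q * J + #|[set j | g j == q.+1]|)%N.
Proof.
move=> g2; rewrite (eq_bigr (fun j => q + (g j == q.+1))%N) => [|j _]; last first.
  by case: (g2 j) => ->; rewrite ?eqxx ?addn1 // (ltn_eqF (ltnSn q)) addn0.
rewrite big_split /= big_const_ord iter_addn_0 -sum1_card [in RHS]big_mkcond /=.
by congr (_ + _)%N; apply: eq_bigr => j _; rewrite inE; case: (_ == _).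
Qed.

Lemma balanced_two_valued {g} : (0 < J)%N -> balanced g ->
  let q := ((\sum_j g j) %/ J)%N in
  (forall j, g j = q \/ g j = q.+1) /\
  #|[set j | g j == q.+1]| = ((\sum_j g j) %% J)%N.
Proof.
move=> J_gt0 bal q.
case: (@arg_minnP _ (Ordinal J_gt0) xpredT g erefl) => j0 _ g_min.
have g2 j : g j = g j0 \/ g j = (g j0).+1 by have := g_min j erefl; have := bal j j0; lia.
have cnt_lt : (#|[set j | g j == (g j0).+1]| < J)%N.
  rewrite -[X in (_ < X)%N]card_ord; apply: proper_card; apply/properP; split.
    exact: subset_predT.
  by exists j0; rewrite // inE (ltn_eqF (ltnSn _)).
have sum_g := sum_two_valued g2.
have -> : q = g j0 by rewrite /q sum_g divnMDl // divn_small // addn0.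
by split=> //; rewrite sum_g modnMDl modn_small.
Qed.

Lemma big_two_valued_eq {T : Type} {idx : T} (op : Monoid.com_law idx) (F : nat -> T)
    {g h q} :
  (forall j, g j = q \/ g j = q.+1) -> (forall j, h j = q \/ h j = q.+1) ->
  #|[set j | g j == q.+1]| = #|[set j | h j == q.+1]| ->
  \big[op/idx]_j F (g j) = \big[op/idx]_j F (h j).
Proof.
have closed_form f : (forall j, f j = q \/ f j = q.+1) ->
    \big[op/idx]_j F (f j) = op (iter #|[set j | f j == q.+1]| (op (F q.+1)) idx)
                                (iter (J - #|[set j | f j == q.+1]|) (op (F q)) idx).
  move=> f2; set S := [set j | f j == q.+1].
  rewrite (bigID (mem S)) /= (eq_bigr (fun=> F q.+1)) => [|j]; last by rewrite inE => /eqP ->.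
  rewrite [X in op _ X](eq_bigr (fun=> F q)) => [|j]; last first.
    by rewrite inE; case: (f2 j) => ->; rewrite ?eqxx.
  rewrite !big_const -[X in (X - _)%N](card_ord J) -(cardC S) addKn.
  by congr (op _ (iter _ _ _)); apply: eq_card => j; rewrite !inE.
by move=> g2 h2 cnt; rewrite !closed_form // cnt.
Qed.

End Transfer.

Definition design_crit {R : realFieldType} {J : nat} (se2 c k : R) (g : 'I_J -> nat) : R :=
  diag_rank1_det (fun j => mean_var se2 c (g j)) k.

Section DesignCriterion.
Context {R : realFieldType} {J : nat} {se2 c k : R}.
Hypotheses (se2_gt0 : 0 < se2) (c_ge0 : 0 <= c) (k_ge0 : 0 <= k).
Implicit Types (g h : 'I_J -> nat).

Lemma design_crit_gt0 {g} : (forall j, (0 < g j)%N) -> 0 < design_crit se2 c k g.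
Proof. by move=> g_gt0; apply: diag_rank1_det_gt0 => // j; apply: mean_var_gt0. Qed.

Lemma design_crit_transfer {g a b} : (forall j, (0 < g j)%N) -> ((g b).+2 <= g a)%N ->
  design_crit se2 c k (transfer g a b) <= design_crit se2 c k g.
Proof.
move=> g_gt0 gba; have ab : a != b by apply: contraTneq gba => ->; lia.
have gb_lt : (g b < (g a).-1)%N by lia.
have [sum_le prod_le] := mean_var_transfer (ltW se2_gt0) c_ge0 (g_gt0 b) gb_lt.
rewrite prednK ?(leq_trans _ gba) // in sum_le prod_le.
apply: diag_rank1_det_exchange (ab) k_ge0 _ _ _ _ _ _ => [j|j /transfer_off ->||||] //.
- exact: mean_var_gt0.
- exact/mean_var_gt0/transfer_gt0.
- exact/mean_var_gt0/transfer_gt0.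
- by rewrite transfer_src transfer_dst.
- by rewrite transfer_src transfer_dst.
Qed.

Lemma design_crit_two_valued_eq {g h q} :
  (forall j, g j = q \/ g j = q.+1) -> (forall j, h j = q \/ h j = q.+1) ->
  #|[set j | g j == q.+1]| = #|[set j | h j == q.+1]| ->
  design_crit se2 c k g = design_crit se2 c k h.
Proof.
move=> g2 h2 cnt; rewrite /design_crit /diag_rank1_det.
rewrite (big_two_valued_eq _ (mean_var se2 c) g2 h2 cnt).
by rewrite (big_two_valued_eq _ (fun n => (mean_var se2 c n)^-1) g2 h2 cnt).
Qed.

Lemma design_crit_min (I : nat) (xs : 'I_J -> nat) : (0 < J)%N ->
  (forall j, xs j = (I %/ J)%N \/ xs j = (I %/ J).+1) ->
  #|[set j | xs j == (I %/ J).+1]| = (I %% J)%N ->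
  forall g, (\sum_j g j)%N = I -> (forall j, (0 < g j)%N) ->
  design_crit se2 c k xs <= design_crit se2 c k g.
Proof.
move=> J_gt0 xs2 xs_cnt g; elim/(@balanced_ind J): g => [g bal | g a b gba IH] sum_g g_gt0.
  have [g2 g_cnt] := balanced_two_valued J_gt0 bal; rewrite sum_g in g2 g_cnt.
  by rewrite (design_crit_two_valued_eq xs2 g2) ?xs_cnt ?g_cnt.
have ab : a != b by apply: contraTneq gba => ->; lia.
apply: le_trans (design_crit_transfer g_gt0 gba); apply: IH; last exact: transfer_gt0.
by rewrite transfer_sum //; lia.
Qed.

End DesignCriterion.

Lemma det_Mbeta {R : realType} {J : nat} (se2 sg2 rho : R) (A : 'M[R]_J)
    (xi : 'I_J -> nat) :
  0 < se2 -> 0 <= sg2 * (1 - rho) -> 0 <= sg2 * rho -> (forall j, (0 < xi j)%N) ->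
  \det (Mbeta se2 sg2 rho A xi)
  = \det A ^+ 2 / design_crit se2 (sg2 * (1 - rho)) (sg2 * rho) xi.
Proof.
move=> se2_gt0 c_ge0 k_ge0 xi_gt0; rewrite /Mbeta /=; set D := M0half R xi.
pose E := diag_mx (\row_j ((xi j)%:R : R)^-1).
have DED : D *m E *m D = 1%:M.
  apply/matrixP => i j; rewrite mul_mx_diag mul_diag_mx !mxE.
  have [<-|_] := eqVneq i j; rewrite ?mulr0n ?mulr0 ?mul0r //.
  by rewrite mulr1n mulrAC -expr2 sqr_sqrtr ?ler0n // mulfV // pnatr_eq0 -lt0n.
have -> : se2 *: 1%:M + D *m Sigma_gamma J sg2 rho *m D
        = D *m (Sigma_gamma J sg2 rho + se2 *: E) *m D.
  by rewrite mulmxDr mulmxDl -[D *m (se2 *: E)]scalemxAr -scalemxAl DED addrC.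
have -> : Sigma_gamma J sg2 rho + se2 *: E
        = diag_mx (\row_j mean_var se2 (sg2 * (1 - rho)) (xi j)) + (sg2 * rho) *: const_mx 1.
  apply/matrixP => i j; rewrite /Sigma_gamma /mean_var !mxE.
  by case: (i == j); rewrite ?mulr1n ?mulr0n; ring.
have D_neq0 : \det D != 0.
  by rewrite det_diag; apply/prodf_neq0 => j _; rewrite mxE sqrtr_eq0 -ltNge ltr0n.
have crit_gt0 := design_crit_gt0 se2_gt0 c_ge0 k_ge0 xi_gt0.
rewrite !det_mulmx det_tr det_inv !det_mulmx det_diag_rank1 => [|j]; last first.
  by rewrite gt_eqF // mean_var_gt0.
by rewrite /design_crit; field; rewrite D_neq0 gt_eqF.
Qed.

Theorem lemma3 (R : realType) (J : nat) (se2 sg2 rho : R) (A : 'M[R]_J) (I : nat)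
  (hJ : (0 < J)%N) (hse : 0 < se2) (hsg : 0 < sg2) (hrho0 : 0 <= rho) (hrho1 : rho <= 1)
  (hA : A \in unitmx) (hI : (0 < I)%N) :
  (forall xistar : 'I_J -> nat,
     (forall j, xistar j = (I %/ J)%N \/ xistar j = (I %/ J).+1) ->
     #|[set j | xistar j == (I %/ J).+1]| = (I %% J)%N ->
     D_optimal I se2 sg2 rho A xistar) /\
  ((I %% J)%N = 0%N -> D_optimal I se2 sg2 rho A (fun _ => (I %/ J)%N)).
Proof.
have c_ge0 : 0 <= sg2 * (1 - rho) by rewrite mulr_ge0 ?subr_ge0 // ltW.
have k_ge0 : 0 <= sg2 * rho by rewrite mulr_ge0 // ltW.
have balanced_opt xs : (forall j, xs j = (I %/ J)%N \/ xs j = (I %/ J).+1) ->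
    #|[set j | xs j == (I %/ J).+1]| = (I %% J)%N -> D_optimal I se2 sg2 rho A xs.
  move=> xs2 xs_cnt; split; first by rewrite /exact_design (sum_two_valued xs2) xs_cnt -divn_eq.
  move=> xi sum_xi [_ xi_gt0].
  have J_le_I : (J <= I)%N.
    by rewrite -sum_xi -[X in (X <= _)%N]card_ord -sum1_card leq_sum.
  have xs_gt0 j : (0 < xs j)%N by case: (xs2 j) => ->; rewrite // divn_gt0.
  have detA2_gt0 : 0 < \det A ^+ 2 by rewrite exprn_even_gt0 // -unitfE -unitmxE.
  rewrite !det_Mbeta // ler_ln ?posrE ?divr_gt0 ?design_crit_gt0 //.
  rewrite ler_pM2l // lef_pV2 ?posrE ?design_crit_gt0 //.
  exact: design_crit_min.
split=> // I_mod; apply: balanced_opt => [j|]; first by left.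
by rewrite I_mod (ltn_eqF (ltnSn _)) cards0.
Qed.
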